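(* The VC-density of the edge relation on the class $\mathcal H$ of all Hamming graphs is $2$.
   Context: For $d,q\in\mathbb N$ and a set $S$ with $|S|=q$, the Hamming graph $H(d,q)$ has vertex set $S^d$, two vertices adjacent iff they agree in all but exactly one coordinate; $\mathcal H=\{H(d,q)\mid d,q\in\mathbb N\}$. For a graph $G$, the edge relation set system is $(V(G),\mathcal S_G)$ with $\mathcal S_G=\{N(v)\mid v\in V(G)\}$ ($N(v)$ the set of neighbours of $v$). Its shatter function is $\pi_G(n)=\max\{|\{S\cap A\mid S\in\mathcal S_G\}| : A\subseteq V(G), |A|=n\}$. For a class $\mathcal C$ of graphs, $\pi_{\mathcal C}(n)=\max\{\pi_G(n)\mid G\in\mathcal C\}$, the VC-dimension of the edge relation on $\mathcal C$ is the supremum over $G\in\mathcal C$ of the largest size of a set $A$ with $\{A\cap S\mid S\in\mathcal S_G\}=\mathcal P(A)$, and the VC-density of the edge relation on $\mathcal C$ is $\inf\{r\in\mathbb R^+ : \pi_{\mathcal C}(n)\in\mathcal O(n^r)\}$ if that VC-dimension is finite, and $\infty$ otherwise. *)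

From HB Require Import structures.
From mathcomp Require Import all_boot all_order all_algebra.
From mathcomp Require Import boolp classical_sets reals ereal exp.
Set Implicit Arguments. Unset Strict Implicit. Unset Printing Implicit Defensive.
Import Order.TTheory GRing.Theory Num.Theory.

Definition hvert (d q : nat) := {ffun 'I_d -> 'I_q}.

Definition hadj (d q : nat) (x y : hvert d q) : bool :=
  #|[set i | x i != y i]| == 1%N.

Definition hnbhd (d q : nat) (v : hvert d q) : {set hvert d q} :=
  [set y | hadj v y].

Definition htraces (d q : nat) (A : {set hvert d q}) : {set {set hvert d q}} :=
  [set hnbhd v :&: A | v : hvert d q].

(* shatter function pi_G(n) of the edge relation set system of H(d,q)
   (0 if there is no n-element vertex set) *)
Definition hshatter (d q n : nat) : nat :=
  \max_(A : {set hvert d q} | #|A| == n) #|htraces A|.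

Local Open Scope classical_set_scope.
Local Open Scope ring_scope.

(* pi_H(n) = max over all Hamming graphs (a supremum of a set of naturals
   bounded by 2^n) *)
Definition shatterH (R : realType) (n : nat) : R :=
  sup [set x : R | exists d q : nat, x = (hshatter d q n)%:R].

Definition vcdimH_finite : Prop :=
  exists k : nat, forall (d q : nat) (A : {set hvert d q}),
    htraces A = powerset A -> (#|A| <= k)%N.

Definition shatterH_bigO (R : realType) (r : R) : Prop :=
  exists (C : R) (N : nat), forall n : nat, (N <= n)%N ->
    shatterH R n <= C * (n%:R `^ r).

Definition vcdensityH (R : realType) : \bar R :=
  if `[< vcdimH_finite >] then
    (inf [set r : R | 0 < r /\ shatterH_bigO r])%:E
  else +oo%E.

From mathcomp Require Import boolp classical_sets reals ereal exp.
(* Imported after classical_sets, so that [set0] is the empty finite set. *)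
From mathcomp Require Import all_boot all_order all_algebra.
From mathcomp Require Import zify lra.
Set Implicit Arguments. Unset Strict Implicit. Unset Printing Implicit Defensive.
Import Order.TTheory GRing.Theory Num.Theory.
Local Close Scope classical_set_scope.
Local Open Scope set_scope.

(* A nonempty trace N(v) :&: A is pinned down by at most two of its points.
   If two points a, b of the trace differ from v in distinct coordinates, then
   v is one of the two common neighbours of a and b.  Otherwise the whole trace
   lies on one line through v, so it is the intersection of A with the line
   spanned by two of its points, or, when v is in A, the intersection of A with
   the line through v and a point of the trace, v removed.  Hence
   pi(n) <= 1 + 3 n^2, which also makes the VC-dimension finite.  Conversely,
   in H(2, m+1) the 2m points of the two punctured axes through the origin have
   m^2 distinct traces, one for each vertex off the axes; so pi(2m) >= m^2 and
   no exponent below 2 works. *)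

Lemma leq_imset2_card (aT1 aT2 rT : finType) (f : aT1 -> aT2 -> rT)
    (A1 : {set aT1}) (A2 : {set aT2}) :
  #|[set f x y | x in A1, y in A2]| <= #|A1| * #|A2|.
Proof. by rewrite curry_imset2X -cardsX leq_imset_card. Qed.

Section HammingTraces.
Variables d q : nat.
Implicit Types (v x y z a b : hvert d q) (A : {set hvert d q}).

Definition hdiff x y : {set 'I_d} := [set i | x i != y i].

Lemma hdiffC x y : hdiff x y = hdiff y x.
Proof. by apply/setP=> i; rewrite !inE eq_sym. Qed.

Lemma hdiff_eq0 x y : (hdiff x y == set0) = (x == y).
Proof.
apply/eqP/eqP=> [e | ->]; last by apply/setP=> i; rewrite !inE eqxx.
apply/ffunP=> i; have : i \notin hdiff x y by rewrite e in_set0.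
by rewrite inE negbK => /eqP.
Qed.

Lemma hdiff_triangle x y z : hdiff x z \subset hdiff x y :|: hdiff y z.
Proof.
apply/subsetP=> i; rewrite !inE; apply: contraR.
by rewrite negb_or !negbK => /andP[/eqP-> /eqP->].
Qed.

Lemma hdiff_subset_trans x y z (S : {set 'I_d}) : hdiff x y \subset S ->
  (hdiff x z \subset S) = (hdiff y z \subset S).
Proof.
move=> sxy; apply/idP/idP => sz.
  by apply: subset_trans (hdiff_triangle y x z) _; rewrite subUset hdiffC sxy sz.
by apply: subset_trans (hdiff_triangle x y z) _; rewrite subUset sxy sz.
Qed.

Lemma hdiff_eq1 x y k :
  (hdiff x y == [set k]) = (x != y) && (hdiff x y \subset [set k]).
Proof.
rewrite subset1 -hdiff_eq0.
case: (hdiff x y =P set0) => [-> | _]; last by rewrite orbF.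
by apply/negbTE/eqP => /setP/(_ k); rewrite in_set0 set11.
Qed.

Lemma hdiff1P x y k :
  hdiff x y = [set k] <-> forall i, (x i == y i) = (i != k).
Proof.
split=> [e i | h]; last by apply/setP=> i; rewrite !inE h negbK.
by have := in_set1 i k; rewrite -e inE => <-; rewrite negbK.
Qed.

Lemma hadjP x y : reflect (exists k, hdiff x y = [set k]) (hadj x y).
Proof. exact: cards1P. Qed.

Definition hspan a b : {set hvert d q} := [set y | hdiff a y \subset hdiff a b].

Lemma hspan_id a : hspan a a = [set a].
Proof.
have a0 : hdiff a a = set0 by apply/eqP; rewrite hdiff_eq0.
by apply/setP=> y; rewrite !inE a0 subset0 hdiff_eq0 eq_sym.
Qed.

(* When [a] and [b] differ exactly at [k < k'], their two common neighbours
   are [hcorner a b], which takes [b]'s value at [k] and [a]'s elsewhere, and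
   [hcorner b a]. *)
Definition hcorner a b : hvert d q :=
  [ffun i : 'I_d =>
     if [forall j : 'I_d, (j < i) ==> (a j == b j)] then b i else a i].

Lemma common_neighbour_hcorner v a b k k' :
  hdiff v a = [set k] -> hdiff v b = [set k'] -> k < k' -> v = hcorner a b.
Proof.
move=> /hdiff1P va /hdiff1P vb kk'.
have prefix i : [forall j : 'I_d, (j < i) ==> (a j == b j)] = (i <= k).
  apply/forallP/idP => [h | ik j].
    rewrite leqNgt; apply/negP => ki; move/implyP: (h k) => /(_ ki).
    have /eqP <- : v k == b k by rewrite vb -val_eqE ltn_eqF.
    by rewrite eq_sym va eqxx.
  apply/implyP=> ji; have jk : j < k := leq_trans ji ik.
  have /eqP <- : v j == a j by rewrite va -val_eqE ltn_eqF.
  have /eqP <- : v j == b j by rewrite vb -val_eqE ltn_eqF // (ltn_trans jk).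
  exact: eqxx.
apply/ffunP=> i; rewrite ffunE prefix; apply/eqP.
case: leqP => [ik | ki]; last by rewrite va -val_eqE gtn_eqF.
by rewrite vb -val_eqE ltn_eqF // (leq_ltn_trans ik kk').
Qed.

Lemma hspan_line v a b k :
  hdiff v a = [set k] -> hdiff v b = [set k] -> a != b ->
  hspan a b = [set y | hdiff v y \subset [set k]].
Proof.
move=> va vb ab; have sva : hdiff v a \subset [set k] by rewrite va.
rewrite /hspan; have -> : hdiff a b = [set k].
  by apply/eqP; rewrite hdiff_eq1 ab -(hdiff_subset_trans _ sva) vb subxx.
by apply/setP=> y; rewrite !inE (hdiff_subset_trans _ sva).
Qed.

Lemma corner_trace v a b A :
  a \in hnbhd v :&: A -> b \in hnbhd v :&: A -> hdiff v a != hdiff v b ->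
  hnbhd v :&: A \in [set hnbhd (hcorner x y) :&: A | x in A, y in A].
Proof.
rewrite !inE => /andP[/hadjP[k va] aA] /andP[/hadjP[k' vb] bA].
rewrite va vb; case: (ltngtP k k') => [kk' _ | k'k _ | /val_inj-> ].
- by rewrite (common_neighbour_hcorner va vb kk'); apply/imset2P; exists a b.
- by rewrite (common_neighbour_hcorner vb va k'k); apply/imset2P; exists b a.
- by rewrite eqxx.
Qed.

Lemma line_trace v a A k :
  a \in hnbhd v :&: A -> hdiff v a = [set k] ->
  {in hnbhd v :&: A, forall y, hdiff v y = [set k]} ->
  hnbhd v :&: A \in [set hspan x y :&: A | x in A, y in A]
                :|: [set hspan x y :&: A :\ x | x in A, y in A].
Proof.
move=> aT va Tk; have aA : a \in A by move: aT; rewrite inE => /andP[].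
have Tline :
    hnbhd v :&: A = [set y in A | (v != y) && (hdiff v y \subset [set k])].
  apply/setP=> y; rewrite !inE andbC -hdiff_eq1; apply: andb_id2l => yA.
  apply/idP/eqP => [vy | vy]; last by apply/hadjP; exists k.
  by apply: Tk; rewrite !inE vy yA.
rewrite in_setU; case: (boolP (v \in A)) => vA.
  apply/orP; right; apply/imset2P; exists v a => //.
  by apply/setP=> y; rewrite Tline /hspan va !inE eq_sym andbC andbA.
apply/orP; left; case: (boolP [exists b in hnbhd v :&: A, b != a]).
  case/exists_inP=> b bT ba; apply/imset2P; exists a b => //.
    by move: bT; rewrite inE => /andP[].
  rewrite (hspan_line va (Tk b bT)); last by rewrite eq_sym.
  apply/setP=> y; rewrite Tline !inE andbC; apply: andb_id2r => yA.
  by rewrite eq_sym (memPn vA y yA).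
rewrite negb_exists_in => /forall_inP Ta; apply/imset2P; exists a a => //.
have -> : hnbhd v :&: A = [set a].
  apply/setP=> y; rewrite in_set1; apply/idP/eqP=> [yT | ->//].
  by apply/eqP; move: (Ta y yT); rewrite negbK.
by rewrite hspan_id; apply/esym/setIidPl; rewrite sub1set.
Qed.

Definition trace_candidates A : {set {set hvert d q}} :=
  set0 |: ([set hnbhd (hcorner x y) :&: A | x in A, y in A]
       :|: ([set hspan x y :&: A | x in A, y in A]
       :|: [set hspan x y :&: A :\ x | x in A, y in A])).

Lemma nbhd_trace_candidate v A : hnbhd v :&: A \in trace_candidates A.
Proof.
rewrite !in_setU1 !in_setU.
case: (set_0Vmem (hnbhd v :&: A)) => [-> | [a aT]]; first by rewrite eqxx.
have /hadjP[k va] : hadj v a by move: aT; rewrite !inE => /andP[].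
case: (boolP [exists b in hnbhd v :&: A, hdiff v b != hdiff v a]).
  by case/exists_inP=> b bT ba; rewrite (corner_trace aT bT) ?orbT // eq_sym.
rewrite negb_exists_in => /forall_inP same.
have := line_trace aT va; rewrite in_setU => -> //; first by rewrite !orbT.
by move=> y yT; move: (same y yT); rewrite negbK va => /eqP.
Qed.

Lemma card_trace_candidates A : #|trace_candidates A| <= 1 + 3 * #|A| ^ 2.
Proof.
have cardU (X Y : {set {set hvert d q}}) : #|X :|: Y| <= #|X| + #|Y|.
  exact: (leq_card_setU X Y).1.
rewrite cardsU1 leq_add ?leq_b1 // -mulnn !mulSn mul0n addn0.
apply: leq_trans (cardU _ _) (leq_add (leq_imset2_card _ _ _) _).
by apply: leq_trans (cardU _ _) (leq_add _ _); apply: leq_imset2_card.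
Qed.

Lemma card_htraces A : #|htraces A| <= 1 + 3 * #|A| ^ 2.
Proof.
apply: leq_trans (card_trace_candidates A); apply/subset_leq_card/subsetP.
by move=> T /imsetP[v _ ->]; apply: nbhd_trace_candidate.
Qed.

Lemma card_htraces_le_hshatter A : #|htraces A| <= hshatter d q #|A|.
Proof.
exact: (@leq_bigmax_cond _ (fun B : {set hvert d q} => #|B| == #|A|)).
Qed.

Lemma hshatter_le n : hshatter d q n <= 1 + 3 * n ^ 2.
Proof. by apply/bigmax_leqP => A /eqP <-; apply: card_htraces. Qed.

End HammingTraces.

Section HammingPlane.
Variable m : nat.
Implicit Types x y : 'I_m.+1.

Definition hpoint x y : hvert 2 m.+1 :=
  [ffun i : 'I_2 => if i == ord0 then x else y].

Lemma hadj_hpoint x y x' y' :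
  hadj (hpoint x y) (hpoint x' y') = ((x != x') + (y != y') == 1).
Proof.
rewrite /hadj -sum1_card big_mkcond /= !big_ord_recl big_ord0 !inE !ffunE /=.
by case: (x != x'); case: (y != y').
Qed.

Definition haxes : {set hvert 2 m.+1} :=
  [set hpoint x ord0 | x in [set~ ord0]]
  :|: [set hpoint ord0 y | y in [set~ ord0]].

Lemma card_haxes : #|haxes| = m + m.
Proof.
have inj1 : injective (hpoint^~ ord0).
  by move=> x x' /(congr1 (fun p : hvert 2 m.+1 => p ord0)); rewrite !ffunE.
have inj2 : injective (hpoint ord0).
  by move=> y y' /(congr1 (fun p : hvert 2 m.+1 => p ord_max)); rewrite !ffunE.
rewrite /haxes; set X1 := [set hpoint x ord0 | x in _].
set X2 := [set hpoint ord0 y | y in _].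
have -> : m + m = #|X1| + #|X2| by rewrite !card_imset // cardsC1 card_ord.
apply/eqP; rewrite (leq_card_setU X1 X2).2 -setI_eq0; apply/eqP/setP=> p.
rewrite in_setI in_set0; apply/negP=> /andP[/imsetP[x xX ->] /imsetP[y _]].
move/(congr1 (fun p : hvert 2 m.+1 => p ord0)); rewrite !ffunE /= => x0.
by rewrite x0 !inE eqxx in xX.
Qed.

Lemma card_htraces_haxes : m * m <= #|htraces haxes|.
Proof.
pose X : {set 'I_m.+1} := [set~ ord0].
pose F (p : 'I_m.+1 * 'I_m.+1) := hnbhd (hpoint p.1 p.2) :&: haxes.
have Fx x y x' :
    y \in X -> x' \in X -> (hpoint x' ord0 \in F (x, y)) = (x == x').
  move=> yX x'X; rewrite !inE hadj_hpoint (imset_f _ x'X) /=.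
  by move: yX; rewrite !inE => ->; case: (x =P x').
have Fy x y y' :
    x \in X -> y' \in X -> (hpoint ord0 y' \in F (x, y)) = (y == y').
  move=> xX y'X; rewrite !inE hadj_hpoint (imset_f _ y'X) orbT /=.
  by move: xX; rewrite !inE => ->; case: (y =P y').
have Finj : {in setX X X &, injective F}.
  move=> [x y] [x' y'] /setXP[xX yX] /setXP[x'X y'X] e.
  have /eqP-> : x' == x by rewrite -(Fx x' y') // -e Fx.
  by have /eqP-> : y' == y by rewrite -(Fy x' y') // -e Fy.
have -> : m * m = #|setX X X| by rewrite cardsX cardsC1 card_ord.
rewrite -(card_in_imset Finj).
by apply/subset_leq_card/subsetP=> T /imsetP[p _ ->]; apply: imset_f.
Qed.

Lemma hshatter_haxes : m * m <= hshatter 2 m.+1 (m + m).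
Proof.
rewrite -card_haxes.
exact: leq_trans card_htraces_haxes (card_htraces_le_hshatter _).
Qed.

End HammingPlane.

Lemma quadratic_lt_exp2 n : 8 <= n -> 1 + 3 * n ^ 2 < 2 ^ n.
Proof.
elim: n => // n IH; rewrite leq_eqVlt => /predU1P[<- // | n8].
by have := IH n8; rewrite [2 ^ _.+1]expnS -!mulnn; nia.
Qed.

Lemma hamming_vcdim_finite : vcdimH_finite.
Proof.
exists 7 => d q A shattered; have := card_htraces A.
rewrite shattered card_powerset; apply: contraTT; rewrite -!ltnNge.
exact: quadratic_lt_exp2.
Qed.

Section ShatterFunction.
Variable R : realType.
Local Open Scope ring_scope.

Lemma shatterH_le n : shatterH R n <= (1 + 3 * n ^ 2)%N%:R.
Proof.
apply: ge_sup; first by exists (hshatter 0 0 n)%:R, 0%N, 0%N.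
by move=> _ [d [q ->]]; rewrite ler_nat hshatter_le.
Qed.

Lemma hshatter_le_shatterH d q n : (hshatter d q n)%:R <= shatterH R n.
Proof.
apply: sup_upper_bound; last by exists d, q.
split; first by exists (hshatter d q n)%:R, d, q.
by exists (1 + 3 * n ^ 2)%N%:R => _ [d' [q' ->]]; rewrite ler_nat hshatter_le.
Qed.

Lemma shatterH_bigO2 : shatterH_bigO (2%:R : R).
Proof.
exists 4%:R, 1%N => n n1; apply: le_trans (shatterH_le n) _.
by rewrite powR_mulrn ?ler0n // -natrX -natrM ler_nat; nia.
Qed.

Lemma powR_nat_unbounded (K s : R) (N : nat) :
  0 < s -> exists2 m : nat, (N <= m)%N & K < m%:R `^ s.
Proof.
move=> s0; pose x := `|K| `^ s^-1.
exists (maxn N (Num.truncn x).+1); first exact: leq_maxl.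
apply: (le_lt_trans (ler_norm K)).
have -> : `|K| = x `^ s by rewrite -powRrM mulVf ?gt_eqF // powRr1.
apply: gt0_ltr_powR; rewrite // ?nnegrE ?powR_ge0 ?ler0n //.
by apply: lt_le_trans (truncnS_gt x) _; rewrite ler_nat leq_maxr.
Qed.

Lemma not_shatterH_bigO (r : R) : 0 < r -> r < 2%:R -> ~ shatterH_bigO r.
Proof.
move=> r0 r2 [C [N bound]]; pose s := 2%:R - r.
have s0 : 0 < s by rewrite subr_gt0.
have [m Nm mC] := powR_nat_unbounded (`|C| * 2%:R `^ r) N.+1 s0.
have m0 : 0 < m%:R :> R by rewrite ltr0n (leq_trans _ Nm).
have mr0 : 0 < m%:R `^ r by rewrite powR_gt0.
have square : (m * m)%N%:R = m%:R `^ r * m%:R `^ s.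
  rewrite -powRD; last by rewrite (gt_eqF m0) implybT.
  by rewrite /s addrC subrK (@powR_mulrn _ _ 2) ?ler0n // natrM expr2.
have double : (m + m)%N%:R `^ r = 2%:R `^ r * m%:R `^ r.
  by rewrite -powRM ?ler0n // -natrM mul2n -addnn.
have : (m * m)%N%:R <= C * (m + m)%N%:R `^ r.
  apply: le_trans (bound _ _); last by rewrite (leq_trans (ltnW Nm)) ?leq_addr.
  apply: le_trans (hshatter_le_shatterH 2 m.+1 _).
  by rewrite ler_nat hshatter_haxes.
rewrite square double mulrA [_ * m%:R `^ r]mulrC ler_pM2l // => msC.
have : C * 2%:R `^ r <= `|C| * 2%:R `^ r by rewrite ler_wpM2r ?powR_ge0 ?ler_norm.
lra.
Qed.

End ShatterFunction.

Local Open Scope ring_scope.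

Theorem mainTheorem18 (R : realType) : vcdensityH R = (2%:R)%:E.
Proof.
rewrite /vcdensityH asboolT; last exact: hamming_vcdim_finite.
congr (_%:E); set E := [set r : R | 0 < r /\ shatterH_bigO r]%classic.
have E2 : E 2%:R by split; [rewrite ltr0n | exact: shatterH_bigO2].
have lbE : lbound E 2%:R.
  move=> r [r0 rO]; rewrite leNgt; apply/negP => r2.
  exact: not_shatterH_bigO rO.
apply/eqP; rewrite eq_le; apply/andP; split.
  by apply: ge_inf; [exists 2%:R |].
by apply: lb_le_inf => //; exists 2%:R.
Qed.
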